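(* There is a constant $c>0$ such that for every $n\ge1$, every simplicial complex $X$ with $\pi_1(X)\cong\mathbb{Z}^n$ has at least $c\,n^{2/3}$ vertices. *)

From Stdlib Require Import Relations.
From mathcomp Require Import all_boot all_order all_algebra.
Set Implicit Arguments. Unset Strict Implicit. Unset Printing Implicit Defensive.
Import GRing.Theory.

Definition is_simplicial_complex (T : finType) (X : {set {set T}}) : Prop :=
  forall s, s \in X -> s != set0 /\
    (forall t : {set T}, t \subset s -> t != set0 -> t \in X).

Definition vertices (T : finType) (X : {set {set T}}) : {set T} :=
  [set v | [set v] \in X].

(* Edge paths (Spanier): vertex sequences in which any two consecutive
   vertices span a simplex (possibly equal vertices). A path starting at v0
   is represented as v0 :: l. *)
Definition edge_rel (T : finType) (X : {set {set T}}) : rel T :=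
  fun u v => [set u; v] \in X.

Definition edge_loop (T : finType) (X : {set {set T}}) (v0 : T) (l : seq T) : Prop :=
  path (edge_rel X) v0 l /\ last v0 l = v0.

Inductive ep_step (T : finType) (X : {set {set T}}) : seq T -> seq T -> Prop :=
  | ep_dup : forall a b u, ep_step X (a ++ [:: u; u] ++ b) (a ++ [:: u] ++ b)
  | ep_tri : forall a b u v w, [set u; v; w] \in X ->
      ep_step X (a ++ [:: u; v; w] ++ b) (a ++ [:: u; w] ++ b).

Definition ep_equiv (T : finType) (X : {set {set T}}) : seq T -> seq T -> Prop :=
  clos_refl_sym_trans (seq T) (ep_step X).

(* The edge-path group pi_1(X, v0) is isomorphic to Z^n: there is a map from
   edge loops at v0 to Z^n = 'rV[int]_n which is a homomorphism for
   concatenation of loops, is surjective, and identifies exactly the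
   equivalent loops (so it induces a group isomorphism on classes). *)
Definition pi1_iso_Zn (T : finType) (X : {set {set T}}) (v0 : T) (n : nat) : Prop :=
  exists phi : seq T -> 'rV[int]_n,
    (forall l1 l2, edge_loop X v0 l1 -> edge_loop X v0 l2 ->
        phi (l1 ++ l2) = (phi l1 + phi l2)%R) /\
    (forall z : 'rV[int]_n, exists l, edge_loop X v0 l /\ phi l = z) /\
    (forall l1 l2, edge_loop X v0 l1 -> edge_loop X v0 l2 ->
        (phi l1 = phi l2 <-> ep_equiv X (v0 :: l1) (v0 :: l2))).

From Stdlib Require Import Relations Reals Lra ClassicalEpsilon.
From mathcomp Require Import all_boot all_order all_algebra ring zify.
Set Implicit Arguments. Unset Strict Implicit. Unset Printing Implicit Defensive.
Import GRing.Theory.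

(* Fixing an edge path from v0 to every vertex turns an isomorphism
   phi : pi_1(X, v0) ~ Z^n into a Z^n-valued 1-cocycle c on X such that phi of
   a loop is the sum of c along it.  The second iterated sum
   A(l) = sum_{i<j} c(e_i)^T c(e_j) of a loop, an integer n x n matrix, changes
   under an elementary move of edge paths only by -+ c(u,v)^T c(v,w) for a
   2-simplex {u,v,w}.  If phi p = e_k, phi q = e_l and phi r = -e_k - e_l, the
   loops pqr and qpr are null-homotopic and A(pqr) - A(qpr) = E_kl - E_lk, so all
   these matrices are integer combinations of the c(u,v)^T c(v,w).  Reducing an
   off-diagonal (n/2) x (n/2) block of entries mod 2, the ordered 2-simplices
   must realize all 2^(n^2/4) parity patterns, so there are about n^2/4 of
   them; since there are at most V^3, V >= n^(2/3) / 2. *)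

Section EdgePaths.
Variables (T : finType) (X : {set {set T}}).
Local Notation e := (edge_rel X).

Lemma edge_rel_sym : symmetric e.
Proof. by move=> u v; rewrite /edge_rel setUC. Qed.

Lemma ep_equiv_backtrack a b x s : path e x s ->
  ep_equiv X (a ++ x :: s ++ rev (belast x s) ++ b) (a ++ x :: b).
Proof.
elim: s x a b => [|y s IHs] x a b /=; first by move=> _; apply: rst_refl.
case/andP=> exy ys.
rewrite rev_cons -cats1 -!catA /= -cat_rcons.
apply: rst_trans; first exact: IHs y (rcons a x) (x :: b) ys.
have xyx : [set x; y; x] \in X.
  rewrite (_ : [set x; y; x] = [set x; y]) //.
  by apply/setP=> z; rewrite !inE orbC orbA orbb.
rewrite cat_rcons; apply: rst_trans; first exact: rst_step (ep_tri a b xyx).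
exact: rst_step (ep_dup X a b x).
Qed.

Definition triangles : {set T * T * T} := [set t | [set t.1.1; t.1.2; t.2] \in X].

Hypothesis X_complex : is_simplicial_complex X.

Lemma triangle_edges u v w : [set u; v; w] \in X -> [&& e u v, e v w & e u w].
Proof.
move=> uvw; have [_ faces] := X_complex uvw.
have edge_face a b : [set a; b] \subset [set u; v; w] -> e a b.
  by move=> sub; apply: faces sub _; apply/set0Pn; exists a; rewrite !inE eqxx.
by rewrite !edge_face //; apply/subsetP=> z; rewrite !inE => /orP[]->; rewrite ?orbT.
Qed.

Lemma edge_vertex u v : e u v -> [set u] \in X.
Proof.
move=> /X_complex [_ faces]; rewrite faces ?sub1set ?inE ?eqxx //.
by apply/set0Pn; exists u; rewrite inE.
Qed.

Lemma card_triangles : (#|triangles| <= #|vertices X| ^ 3)%N.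
Proof.
rewrite !expnS expn0 muln1 mulnA -!cardsX.
apply: subset_leq_card; apply/subsetP => [[[u v] w]].
rewrite !inE /= => /triangle_edges /and3P [uv vw _].
by rewrite (edge_vertex uv) (edge_vertex vw) (edge_vertex (_ : e w v)) // edge_rel_sym.
Qed.

End EdgePaths.

Local Open Scope ring_scope.

Section IteratedSums.
Variables (T : finType) (X : {set {set T}}) (R : pzRingType) (n : nat).
Variable c : T -> T -> 'rV[R]_n.

Fixpoint path_sum (x : T) (s : seq T) : 'rV[R]_n :=
  if s is y :: s' then c x y + path_sum y s' else 0.

Fixpoint path_sum2 (x : T) (s : seq T) : 'M[R]_n :=
  if s is y :: s' then (c x y)^T *m path_sum y s' + path_sum2 y s' else 0.

Definition seq_sum (s : seq T) := if s is x :: s' then path_sum x s' else 0.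
Definition seq_sum2 (s : seq T) := if s is x :: s' then path_sum2 x s' else 0.

Lemma path_sum_cat x s r : path_sum x (s ++ r) = path_sum x s + path_sum (last x s) r.
Proof. by elim: s x => [|y s IHs] x /=; rewrite ?add0r // IHs addrA. Qed.

Lemma path_sum2_cat x s r :
  path_sum2 x (s ++ r) =
  path_sum2 x s + (path_sum x s)^T *m path_sum (last x s) r + path_sum2 (last x s) r.
Proof.
elim: s x => [|y s IHs] x /=; first by rewrite trmx0 mul0mx !add0r.
rewrite IHs path_sum_cat mulmxDr linearD /= mulmxDl !addrA.
by congr (_ + _); rewrite -!addrA; congr (_ + _); rewrite addrCA.
Qed.

Lemma seq_sum_cat a x r : seq_sum (a ++ x :: r) = seq_sum (rcons a x) + path_sum x r.
Proof. by case: a => [|y a] /=; rewrite ?add0r // -cat_rcons path_sum_cat last_rcons. Qed.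

Lemma seq_sum2_cat a x r :
  seq_sum2 (a ++ x :: r) =
  seq_sum2 (rcons a x) + (seq_sum (rcons a x))^T *m path_sum x r + path_sum2 x r.
Proof.
case: a => [|y a] /=; first by rewrite trmx0 mul0mx !add0r.
by rewrite -cat_rcons path_sum2_cat last_rcons.
Qed.

Definition triangle_term (t : T * T * T) : 'M[R]_n := (c t.1.1 t.1.2)^T *m c t.1.2 t.2.

Definition in_triangle_span (M : 'M[R]_n) : Prop :=
  exists k : T * T * T -> R, M = \sum_(t in triangles X) k t *: triangle_term t.

Lemma triangle_span0 : in_triangle_span 0.
Proof. by exists (fun=> 0); rewrite big1 // => t _; rewrite scale0r. Qed.

Lemma triangle_spanD M N :
  in_triangle_span M -> in_triangle_span N -> in_triangle_span (M + N).
Proof.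
move=> [k ->] [l ->]; exists (fun t => k t + l t).
by rewrite -big_split; apply: eq_bigr => t _; rewrite scalerDl.
Qed.

Lemma triangle_spanB M N :
  in_triangle_span M -> in_triangle_span N -> in_triangle_span (M - N).
Proof.
move=> [k ->] [l ->]; exists (fun t => k t - l t).
by rewrite -sumrB; apply: eq_bigr => t _; rewrite scalerBl.
Qed.

Lemma triangle_span_term t : t \in triangles X -> in_triangle_span (triangle_term t).
Proof.
move=> tX; exists (fun t' => (t' == t)%:R).
rewrite (bigD1 t) //= eqxx scale1r big1 ?addr0 // => t' /andP [_ /negbTE ->].
by rewrite scale0r.
Qed.

Lemma ep_equiv_diff (V : zmodType) (P : V -> Prop) (f : seq T -> V) :
  P 0 -> (forall u v, P u -> P v -> P (u - v)) ->
  (forall s s', ep_step X s s' -> P (f s - f s')) ->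
  forall s s', ep_equiv X s s' -> P (f s - f s').
Proof.
move=> P0 PB Pstep s s'; elim=> {s s'} [s s' /Pstep //|s|s s' _ Ps|s1 s2 s3 _ P12 _ P23].
- by rewrite subrr.
- by rewrite -opprB -sub0r; apply: PB.
- have -> : f s1 - f s3 = (f s1 - f s2) - (0 - (f s2 - f s3)).
    by rewrite sub0r opprK addrA subrK.
  by apply: (PB) => //; apply: (PB).
Qed.

Hypothesis c_refl : forall u, c u u = 0.
Hypothesis c_cocycle : forall u v w, [set u; v; w] \in X -> c u v + c v w = c u w.

Lemma ep_step_seq_sum s s' : ep_step X s s' -> seq_sum s = seq_sum s'.
Proof.
case=> [a b u|a b u v w uvw] /=; rewrite !seq_sum_cat /=; first by rewrite c_refl add0r.
by rewrite [c u v + _]addrA c_cocycle.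
Qed.

Lemma ep_step_seq_sum2 s s' :
  ep_step X s s' -> in_triangle_span (seq_sum2 s - seq_sum2 s').
Proof.
case=> [a b u|a b u v w uvw] /=; rewrite !seq_sum2_cat /=.
  by rewrite c_refl add0r trmx0 mul0mx add0r subrr; apply: triangle_span0.
rewrite [c u v + _]addrA c_cocycle // opprD addrACA subrr add0r.
rewrite -(c_cocycle uvw) [(_ + _)^T]linearD mulmxDl mulmxDr /=.
set P := _ *m c v w; set Q1 := (c u v)^T *m _; set Q2 := (c v w)^T *m _.
rewrite -(addrA P) (addrA Q1) addrK.
have uvwT : (u, v, w) \in triangles X by rewrite inE.
exact: triangle_span_term uvwT.
Qed.

Lemma ep_equiv_seq_sum s s' : ep_equiv X s s' -> seq_sum s = seq_sum s'.
Proof.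
move=> ss'; apply/subr0_eq.
apply: (ep_equiv_diff (P := eq^~ 0)) ss' => [//|? ? -> ->|? ? /ep_step_seq_sum ->].
  by rewrite subr0.
by rewrite subrr.
Qed.

Lemma ep_equiv_seq_sum2 s s' :
  ep_equiv X s s' -> in_triangle_span (seq_sum2 s - seq_sum2 s').
Proof.
apply: ep_equiv_diff; first exact: triangle_span0; first exact: triangle_spanB.
exact: ep_step_seq_sum2.
Qed.

End IteratedSums.

Section TreeCochain.
Variables (T : finType) (X : {set {set T}}) (v0 : T) (n : nat).
Variable phi : seq T -> 'rV[int]_n.
Hypothesis X_complex : is_simplicial_complex X.
Hypothesis phi_cat : forall l1 l2, edge_loop X v0 l1 -> edge_loop X v0 l2 ->
  phi (l1 ++ l2) = phi l1 + phi l2.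
Hypothesis phi_eq : forall l1 l2, edge_loop X v0 l1 -> edge_loop X v0 l2 ->
  phi l1 = phi l2 <-> ep_equiv X (v0 :: l1) (v0 :: l2).
Local Notation e := (edge_rel X).

Definition reachable (u : T) := connect e v0 u.

Definition tree_path (u : T) : seq T :=
  if u == v0 then [::]
  else epsilon (inhabits [::]) (fun p => path e v0 p /\ last v0 p = u).

Definition retrace (p : seq T) := rev (belast v0 p).

Definition tree_loop (u w : T) := tree_path u ++ w :: retrace (tree_path w).

(* Forced to 0 on the diagonal and off the component of v0, where the loop
   [tree_loop u w] may not exist. *)
Definition tree_cochain (u w : T) : 'rV[int]_n :=
  if (u == w) || ~~ reachable u then 0 else phi (tree_loop u w).

Lemma tree_pathP u : reachable u -> path e v0 (tree_path u) /\ last v0 (tree_path u) = u.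
Proof.
rewrite /tree_path; case: eqP => [-> //|_] /connectP [p p_path ->].
by apply: (epsilon_spec (inhabits [::]) (fun q => path e v0 q /\ _)); exists p.
Qed.

Lemma reachable_edge u w : reachable u -> e u w -> reachable w.
Proof. by move=> v0u uw; apply: connect_trans v0u (connect1 uw). Qed.

Lemma retrace_path p : path e v0 p -> path e (last v0 p) (retrace p).
Proof. by rewrite /retrace rev_path; apply: sub_path => x y /=; rewrite edge_rel_sym. Qed.

Lemma retrace_cons p : last v0 p :: retrace p = rev (v0 :: p).
Proof. by rewrite [v0 :: p]lastI rev_rcons. Qed.

Lemma last_retrace p : last (last v0 p) (retrace p) = v0.
Proof. by rewrite -(last_cons v0) retrace_cons rev_cons last_rcons. Qed.

Lemma retraceK p : rev (belast (last v0 p) (retrace p)) = p.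
Proof.
have := congr1 rev (retrace_cons p).
by rewrite revK [_ :: retrace p]lastI rev_rcons; case.
Qed.

Lemma retrace_cancel a b p x : path e v0 p -> last v0 p = x ->
  ep_equiv X (a ++ x :: retrace p ++ p ++ b) (a ++ x :: b).
Proof.
move=> /retrace_path back <-; have := ep_equiv_backtrack a b back.
by rewrite retraceK.
Qed.

Lemma edge_loop_cat l1 l2 :
  edge_loop X v0 l1 -> edge_loop X v0 l2 -> edge_loop X v0 (l1 ++ l2).
Proof. by move=> [p1 e1] [p2 e2]; split; rewrite ?cat_path ?last_cat e1 ?p1. Qed.

Lemma tree_loopP u w : reachable u -> e u w -> edge_loop X v0 (tree_loop u w).
Proof.
move=> v0u uw; have [pu eu] := tree_pathP v0u.
have [pw ew] := tree_pathP (reachable_edge v0u uw).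
split; rewrite /tree_loop ?cat_path ?last_cat eu /= ?pu ?uw.
  by rewrite -{1}ew retrace_path.
by rewrite -{1}ew last_retrace.
Qed.

Lemma phi_nil : phi [::] = 0.
Proof.
have nil_loop : edge_loop X v0 [::] by [].
by apply: (addrI (phi [::])); rewrite -phi_cat // addr0.
Qed.

Lemma cons_tree_path u : reachable u ->
  v0 :: tree_path u = rcons (belast v0 (tree_path u)) u.
Proof. by move=> /tree_pathP [_ eu]; rewrite lastI eu. Qed.

Lemma tree_loop_refl u : reachable u -> ep_equiv X (v0 :: tree_loop u u) [:: v0].
Proof.
move=> v0u; have [pu _] := tree_pathP v0u.
rewrite /tree_loop -cat_cons cons_tree_path // cat_rcons.
apply: rst_trans; first exact: rst_step (ep_dup X _ _ u).
rewrite /= -cat_rcons -cons_tree_path //.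
by have := ep_equiv_backtrack [::] [::] pu; rewrite /= cats0.
Qed.

Lemma tree_loop_triangle u v w : reachable u -> [set u; v; w] \in X ->
  ep_equiv X (v0 :: tree_loop u v ++ tree_loop v w) (v0 :: tree_loop u w).
Proof.
move=> v0u uvw; have /and3P [uv _ _] := triangle_edges X_complex uvw.
have [pv ev] := tree_pathP (reachable_edge v0u uv).
rewrite /tree_loop -catA /= -!cat_cons.
apply: rst_trans; first exact: retrace_cancel pv ev.
rewrite cons_tree_path // !cat_rcons.
exact: rst_step (ep_tri _ _ uvw).
Qed.

Lemma tree_cochainE u w : reachable u -> e u w -> tree_cochain u w = phi (tree_loop u w).
Proof.
move=> v0u; rewrite /tree_cochain v0u orbF; case: eqVneq => [<- uu|//].
rewrite -phi_nil; apply/phi_eq => //; first exact: tree_loopP.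
exact/rst_sym/tree_loop_refl.
Qed.

Lemma tree_cochain_refl u : tree_cochain u u = 0.
Proof. by rewrite /tree_cochain eqxx. Qed.

Lemma tree_cochain_cocycle u v w : [set u; v; w] \in X ->
  tree_cochain u v + tree_cochain v w = tree_cochain u w.
Proof.
move=> uvw; have /and3P [uv vw uw] := triangle_edges X_complex uvw.
have [v0u|not_v0u] := boolP (reachable u).
  have v0v := reachable_edge v0u uv.
  have [luv lvw] := (tree_loopP v0u uv, tree_loopP v0v vw).
  rewrite !tree_cochainE // -phi_cat //.
  apply/phi_eq; [exact: edge_loop_cat | exact: tree_loopP | exact: tree_loop_triangle].
have not_v0v : ~~ reachable v.
  by apply: contra (not_v0u) => v0v; apply: reachable_edge v0v _; rewrite edge_rel_sym.
by rewrite /tree_cochain (negbTE not_v0u) (negbTE not_v0v) !orbT addr0.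
Qed.

Definition tree_closure (l : seq T) := l ++ retrace (tree_path (last v0 l)).

Lemma tree_closureP l : path e v0 l -> edge_loop X v0 (tree_closure l).
Proof.
move=> pl; have v0x : reachable (last v0 l) by apply/connectP; exists l.
have [px ex] := tree_pathP v0x.
split; rewrite /tree_closure ?cat_path ?last_cat ?pl /=.
  by rewrite -{1}ex retrace_path.
by rewrite -{1}ex last_retrace.
Qed.

Lemma phi_tree_closure l : path e v0 l -> phi (tree_closure l) = path_sum tree_cochain v0 l.
Proof.
elim/last_ind: l => [|l y IHl]; first by rewrite /tree_closure /tree_path eqxx phi_nil.
rewrite rcons_path => /andP [pl xy].
set x := last v0 l in xy IHl.
have v0x : reachable x by apply/connectP; exists l.
have [px ex] := tree_pathP v0x.
have loop_l := tree_closureP pl; have loop_xy := tree_loopP v0x xy.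
have loop_ly : edge_loop X v0 (tree_closure (rcons l y)).
  by apply: tree_closureP; rewrite rcons_path pl.
rewrite -cats1 path_sum_cat /= addr0 -IHl // tree_cochainE // -phi_cat // cats1.
apply/phi_eq => //; first exact: edge_loop_cat.
apply: rst_sym.
rewrite /tree_closure /tree_loop last_rcons -cats1 -!catA /= -!cat_cons.
rewrite [v0 :: l]lastI !cat_rcons.
exact: retrace_cancel px ex.
Qed.

Lemma phi_loop_sum l : edge_loop X v0 l -> phi l = path_sum tree_cochain v0 l.
Proof.
move=> [pl el]; rewrite -phi_tree_closure //.
by rewrite /tree_closure el /tree_path eqxx cats0.
Qed.

Lemma null_loop_sum2 l : edge_loop X v0 l -> phi l = 0 ->
  in_triangle_span X tree_cochain (path_sum2 tree_cochain v0 l).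
Proof.
move=> ll phil0; have nil_loop : edge_loop X v0 [::] by [].
have := ep_equiv_seq_sum2 tree_cochain_refl tree_cochain_cocycle
  (s := v0 :: l) (s' := [:: v0]).
by rewrite /= subr0; apply; apply/phi_eq; rewrite // phil0 phi_nil.
Qed.

Lemma path_sum2_loop_cat p q : edge_loop X v0 p -> edge_loop X v0 q ->
  path_sum2 tree_cochain v0 (p ++ q) =
  path_sum2 tree_cochain v0 p + (phi p)^T *m phi q + path_sum2 tree_cochain v0 q.
Proof.
move=> lp lq; rewrite path_sum2_cat (phi_loop_sum lp) (phi_loop_sum lq).
by case: lp => _ ->.
Qed.

Lemma path_sum2_swap p q r : edge_loop X v0 p -> edge_loop X v0 q -> edge_loop X v0 r ->
  path_sum2 tree_cochain v0 (p ++ q ++ r) - path_sum2 tree_cochain v0 (q ++ p ++ r) =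
  (phi p)^T *m phi q - (phi q)^T *m phi p.
Proof.
move=> lp lq lr; have lpr := edge_loop_cat lp lr; have lqr := edge_loop_cat lq lr.
rewrite !path_sum2_loop_cat ?edge_loop_cat // !phi_cat // !mulmxDr.
by apply/matrixP=> i j; rewrite !mxE; ring.
Qed.

Hypothesis phi_surj : forall z, exists l, edge_loop X v0 l /\ phi l = z.

Lemma commutator_in_span k l :
  in_triangle_span X tree_cochain (delta_mx k l - delta_mx l k).
Proof.
have [p [lp phi_p]] := phi_surj (delta_mx ord0 k).
have [q [lq phi_q]] := phi_surj (delta_mx ord0 l).
have [r [lr phi_r]] := phi_surj (- (delta_mx ord0 k + delta_mx ord0 l)).
have null_span s1 s2 : edge_loop X v0 s1 -> edge_loop X v0 s2 ->
    phi s1 + phi s2 = delta_mx ord0 k + delta_mx ord0 l ->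
    in_triangle_span X tree_cochain (path_sum2 tree_cochain v0 (s1 ++ s2 ++ r)).
  move=> l1 l2 phi12; have l2r := edge_loop_cat l2 lr.
  apply: null_loop_sum2; first exact: edge_loop_cat.
  by rewrite !phi_cat // addrA phi12 phi_r subrr.
have pq : phi p + phi q = delta_mx ord0 k + delta_mx ord0 l by rewrite phi_p phi_q.
have qp : phi q + phi p = delta_mx ord0 k + delta_mx ord0 l by rewrite addrC.
have := triangle_spanB (null_span p q lp lq pq) (null_span q p lq lp qp).
by rewrite path_sum2_swap // phi_p phi_q !trmx_delta !mul_delta_mx.
Qed.

End TreeCochain.

Lemma dvdz_sum_odd_coef (I : finType) (P : pred I) (k x : I -> int) :
  (2 %| \sum_(i | P i) k i * x i - \sum_(i | P i && ~~ (2 %| k i)%Z) x i)%Z.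
Proof.
rewrite big_mkcondr -sumrB rpred_sum // => i _.
case: ifP => [k_odd | /negbFE k_even]; last by rewrite subr0 dvdz_mulr.
by rewrite -{2}[x i]mul1r -mulrBl dvdz_mulr //; lia.
Qed.

Section TriangleCount.
Variables (T : finType) (X : {set {set T}}) (n : nat) (c : T -> T -> 'rV[int]_n).
Hypothesis skew_delta_in_span :
  forall k l : 'I_n, in_triangle_span X c (delta_mx k l - delta_mx l k).

Lemma block_leq_card_triangles m p : (m + p <= n)%N -> (m * p <= #|triangles X|)%N.
Proof.
move=> mp_le_n.
pose i a : 'I_n := widen_ord mp_le_n (lshift p a).
pose j b : 'I_n := widen_ord mp_le_n (rshift m b).
have ij_neq a b : (i a == j b) = false.
  by apply/negbTE; rewrite -val_eqE /= neq_ltn (leq_trans (ltn_ord a)) ?leq_addr.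
have ij_eq (q r : 'I_m * 'I_p) : (i q.1 == i r.1) && (j q.2 == j r.2) = (q == r).
  by case: q r => [a b] [a' b']; rewrite xpair_eqE -!val_eqE /= eqn_add2l.
pose tau t (q : 'I_m * 'I_p) := triangle_term c t (i q.1) (j q.2).
pose pattern (U : {set T * T * T}) := [set q | ~~ (2 %| \sum_(t in U) tau t q)%Z].
have pattern_onto S : S \in pattern @: powerset (triangles X).
  (* The (i a, j b) entries of M are the indicator of S; mod 2 they only
     depend on the triangles with an odd coefficient. *)
  pose M : 'M[int]_n := \sum_(q in S) (delta_mx (i q.1) (j q.2) - delta_mx (j q.2) (i q.1)).
  have [k M_span] : in_triangle_span X c M.
    by apply: big_ind => //; [exact: triangle_span0 | exact: triangle_spanD].
  pose U := [set t in triangles X | ~~ (2 %| k t)%Z].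
  apply/imsetP; exists U.
    by rewrite powersetE; apply/subsetP => t; rewrite inE => /andP [].
  apply/setP => q; rewrite inE.
  have Mq : M (i q.1) (j q.2) = (q \in S)%:R.
    rewrite summxE; under eq_bigr => r _ do rewrite !mxE ij_neq subr0 ij_eq.
    have [qS|qNS] := boolP (q \in S).
      rewrite (bigD1 q) //= eqxx big1 ?addr0 // => r /andP [_ /negbTE].
      by rewrite eq_sym => ->.
    by rewrite big1 // => r rS; case: eqP rS => // <-; rewrite (negbTE qNS).
  have Mq_span : M (i q.1) (j q.2) = \sum_(t in triangles X) k t * tau t q.
    by rewrite M_span summxE; apply: eq_bigr => t _; rewrite mxE.
  have U_sum : \sum_(t | (t \in triangles X) && ~~ (2 %| k t)%Z) tau t q
               = \sum_(t in U) tau t q.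
    by apply: eq_bigl => t; rewrite /U inE.
  have := dvdz_sum_odd_coef (mem (triangles X)) k (tau^~ q).
  rewrite -Mq_span Mq U_sum.
  by case: (q \in S) => /= par; apply/esym; lia.
have : (#|powerset [set: 'I_m * 'I_p]| <= #|powerset (triangles X)|)%N.
  apply: leq_trans (leq_imset_card pattern _).
  by apply: subset_leq_card; apply/subsetP => S _; apply: pattern_onto.
by rewrite !card_powerset cardsT card_prod !card_ord leq_exp2l.
Qed.

End TriangleCount.

Section RealBound.
Local Open Scope R_scope.

Lemma Rpower_two_thirds_le (n N : nat) : (1 <= n)%N -> (n * n <= 8 * (N * N * N))%N ->
  / 2 * Rpower (INR n) (2 / 3) <= INR N.
Proof.
move=> /leP n_ge1 /leP nN.
have n_pos : 0 < INR n by apply: lt_0_INR.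
set y := Rpower (INR n) (2 / 3).
have y_cube : y * y * y = INR n * INR n.
  rewrite -[y * y * y]Rmult_1_r !Rmult_assoc -/(y ^ 3) -Rpower_pow; last exact: exp_pos.
  rewrite Rpower_mult (_ : INR n * INR n = INR n ^ 2); last by rewrite /= Rmult_1_r.
  by rewrite -Rpower_pow //; congr Rpower; rewrite /=; lra.
move/le_INR: nN; rewrite !mult_INR -y_cube (_ : INR 8 = 8); last by rewrite /=; lra.
have N2_ge0 : 0 <= 2 * INR N by have := pos_INR N; lra.
move=> cube_le; apply: Rnot_lt_le => lt_y; have {}lt_y : 2 * INR N < y by lra.
have sq_lt := Rmult_le_0_lt_compat _ _ _ _ N2_ge0 N2_ge0 lt_y lt_y.
have := Rmult_le_0_lt_compat _ _ _ _ (Rmult_le_pos _ _ N2_ge0 N2_ge0) N2_ge0 sq_lt lt_y.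
lra.
Qed.

End RealBound.

Theorem mainTheorem8 :
  exists c : R, Rlt (IZR Z0) c /\
    forall (n : nat) (T : finType) (X : {set {set T}}) (v0 : T),
      (1 <= n)%N ->
      is_simplicial_complex X ->
      [set v0] \in X ->
      pi1_iso_Zn X v0 n ->
      Rle (Rmult c (Rpower (INR n) (Rdiv (IZR (Zpos 2)) (IZR (Zpos 3))))) (INR #|vertices X|).
Proof.
exists (Rinv (IZR 2)); split; first lra.
move=> n T X v0 n_ge1 X_complex v0X [phi [phi_cat [phi_surj phi_eq]]].
apply: Rpower_two_thirds_le => //.
have halves : (n./2 + uphalf n <= n)%N.
  by rewrite uphalf_half addnCA addnn odd_double_half.
have := block_leq_card_triangles (commutator_in_span X_complex phi_cat phi_eq phi_surj) halves.
have := card_triangles X_complex.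
have : (0 < #|vertices X|)%N by apply/card_gt0P; exists v0; rewrite inE.
have := uphalf_half n; have := odd_double_half n.
nia.
Qed.
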